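(* Let $\gamma$ be an oriented geodesic on the modular surface $\Sigma_{\mathrm{Mod}}$ obtained by projecting the simple closed curve $p/q\subset\Sigma_{1,1}$ via the 6-fold covering map $\Sigma_{1,1}\to\Sigma_{\mathrm{Mod}}$. Then under the covering map, $\gamma$ has six lifts in $\Sigma_{1,1}$: the curves $p/q$, $q/(q-p)$, $(p-q)/p$, and each of these three curves oriented in the opposite direction.
   Context: $\Sigma_{\mathrm{Mod}}=\mathbb{H}^2/\mathrm{PSL}(2,\mathbb{Z})$. The once-punctured torus $\Sigma_{1,1}$ is viewed as a quotient of $\mathbb{R}^2$ tiled by equilateral triangles with the vertex lattice $\Lambda$ removed, modulo the translations along two edge directions; the curve $p/q$ (coprime, $1/0$ allowed) is the projection of a line of slope $p/q$ avoiding $\Lambda$, measured with respect to the two edge directions as coordinate axes. The 6-fold covering $\Sigma_{1,1}\to\Sigma_{\mathrm{Mod}}$ is the quotient by the group generated by the rotation of order three about the centre of a triangle and the rotation of order two about the midpoint of an edge. *)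

From Stdlib Require Import Reals ZArith List.
Open Scope R_scope.

(* Points of the plane R^2, written in coordinates (x, y) meaning
   x * e1 + y * e2, where e1, e2 are unit vectors along two edge
   directions of the equilateral triangle tiling, e1 at angle 0 and
   e2 at angle 120 degrees (so e1 + e2 is also an edge direction, at 60 deg).
   The vertex lattice Lambda is Z e1 + Z e2. *)
Definition pt := (R * R)%type.

Definition in_lattice (x : pt) : Prop :=
  exists m n : Z, x = (IZR m, IZR n).

(* Rotation of order three (by +120 degrees) about the centre (2/3, 1/3)
   of the triangle with vertices 0, e1, e1 + e2. *)
Definition rho (x : pt) : pt := (1 - snd x, fst x - snd x).

(* Rotation of order two about the midpoint (1/2, 0) of the edge [0, e1]. *)
Definition sigma (x : pt) : pt := (1 - fst x, - snd x).

Definition transl (m n : Z) (x : pt) : pt := (fst x + IZR m, snd x + IZR n).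

(* The group of plane isometries generated by Lambda-translations, rho and
   sigma: these are exactly the lifts to R^2 of the deck transformations of
   the 6-fold covering Sigma_{1,1} -> Sigma_Mod (Lambda-translations act
   trivially on Sigma_{1,1}).  Closure under composition suffices since all
   generators have finite order or have inverses among the generators. *)
Inductive deck : (pt -> pt) -> Prop :=
| deck_rho : deck rho
| deck_sigma : deck sigma
| deck_trans (m n : Z) : deck (transl m n)
| deck_comp (f g : pt -> pt) : deck f -> deck g -> deck (fun x => f (g x)).

(* Its projection to Sigma_{1,1} is an oriented simple closed curve; its
   (oriented, free homotopy) class depends only on v up to positive scaling. *)
Definition represents (v : Z * Z) (l : R -> pt) : Prop :=
  exists (u1 u2 k : R), 0 < k /\
    (forall t, l t = (u1 + t * k * IZR (fst v), u2 + t * k * IZR (snd v))) /\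
    (forall t, ~ in_lattice (l t)).

(* The oriented curve p/q: slope p/q w.r.t. the edge axes, i.e. direction
   vector q e1 + p e2.  The opposite orientation is the negated vector. *)
Definition slope_dir (p q : Z) : Z * Z := (q, p).
Definition rev_dir (v : Z * Z) : Z * Z := ((- fst v)%Z, (- snd v)%Z).

(* The oriented curve with primitive direction v in Sigma_{1,1} is a lift of
   gamma = projection of the oriented curve p/q to Sigma_Mod iff some lift of
   a deck transformation carries a line representing p/q onto a line
   representing v (preserving orientation). *)
Definition is_lift (p q : Z) (v : Z * Z) : Prop :=
  exists (l : R -> pt) (g : pt -> pt),
    represents (slope_dir p q) l /\ deck g /\ represents v (fun t => g (l t)).

From Pilot Require Import Defs.
From Stdlib Require Import Reals ZArith List Lra Lia.
Import ListNotations.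

(* Every generator of [deck] acts on directions by a power of the rotation
   [turn] by -60 degrees ([rho] by its fourth power, [sigma] by its third),
   so a deck transformation maps a line of direction w avoiding the lattice
   to a line of direction turn^a w avoiding the lattice, and conversely every
   power of [turn] is realised this way.  A line determines its primitive
   direction, and [turn] preserves primitivity, so the lifts of p/q are the
   directions turn^a (q, p); as [turn] has order 6 and fixes no nonzero
   vector, these are six distinct vectors. *)

Definition primitive (v : Z * Z) : Prop := Z.gcd (fst v) (snd v) = 1%Z.

Definition turn (v : Z * Z) : Z * Z := (snd v, (snd v - fst v)%Z).

Definition turn_pt (x : pt) : pt := (snd x, snd x - fst x).

Definition padd (x y : pt) : pt := (fst x + fst y, snd x + snd y).

Definition turn_affine (a : nat) (g : pt -> pt) : Prop :=
  exists c : pt, forall x, g x = padd (Nat.iter a turn_pt x) c.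

Definition lifts (p q : Z) : list (Z * Z) :=
  [slope_dir p q; slope_dir q (q - p); slope_dir (p - q) p;
   rev_dir (slope_dir p q); rev_dir (slope_dir q (q - p));
   rev_dir (slope_dir (p - q) p)].

Lemma primitive_turn v : primitive v -> primitive (turn v).
Proof.
  unfold primitive, turn; cbn [fst snd].
  replace (snd v - fst v)%Z with (- (fst v - snd v))%Z by ring.
  now rewrite Z.gcd_opp_r, Z.gcd_sub_diag_r, Z.gcd_comm.
Qed.

Lemma primitive_iter_turn a v : primitive v -> primitive (Nat.iter a turn v).
Proof. induction a; intro Hv; simpl; [exact Hv | apply primitive_turn; auto]. Qed.

Lemma iter_turn_6 v : Nat.iter 6 turn v = v.
Proof. destruct v as [x y]; unfold turn; cbn; f_equal; lia. Qed.

Lemma iter_turn_mod6 a v : Nat.iter a turn v = Nat.iter (a mod 6) turn v.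
Proof.
  assert (Hperiod : forall k w, Nat.iter (6 * k) turn w = w).
  { induction k as [|k IHk]; intro w; [reflexivity|].
    now rewrite Nat.mul_succ_r, Nat.add_comm, Nat.iter_add, iter_turn_6, IHk. }
  transitivity (Nat.iter (6 * (a / 6) + a mod 6) turn v).
  - now rewrite <- Nat.div_mod_eq.
  - now rewrite Nat.iter_add, Hperiod.
Qed.

Lemma iter_turn_pt_padd a x y :
  Nat.iter a turn_pt (padd x y) = padd (Nat.iter a turn_pt x) (Nat.iter a turn_pt y).
Proof.
  induction a as [|a IHa]; [reflexivity|]. simpl. rewrite IHa.
  destruct (Nat.iter a turn_pt x), (Nat.iter a turn_pt y).
  unfold turn_pt, padd; simpl; f_equal; ring.
Qed.

Lemma iter_turn_pt_line a u1 u2 s v :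
  Nat.iter a turn_pt (u1 + s * IZR (fst v), u2 + s * IZR (snd v)) =
  (fst (Nat.iter a turn_pt (u1, u2)) + s * IZR (fst (Nat.iter a turn v)),
   snd (Nat.iter a turn_pt (u1, u2)) + s * IZR (snd (Nat.iter a turn v))).
Proof.
  induction a as [|a IHa]; [reflexivity|]. simpl. rewrite IHa.
  destruct (Nat.iter a turn_pt (u1, u2)), (Nat.iter a turn v).
  unfold turn_pt, turn; simpl. rewrite minus_IZR. f_equal; ring.
Qed.

Lemma deck_turn_affine g : deck g -> exists a, turn_affine a g.
Proof.
  induction 1 as [| |m n|f g _ [a [c Hf]] _ [b [c' Hg]]].
  - exists 4%nat, (1, 0). intros [x y]; unfold rho, padd; simpl; f_equal; ring.
  - exists 3%nat, (1, 0). intros [x y]; unfold Defs.sigma, padd; simpl; f_equal; ring.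
  - exists 0%nat, (IZR m, IZR n). reflexivity.
  - exists (a + b)%nat, (padd (Nat.iter a turn_pt c') c). intro x.
    rewrite Hf, Hg, iter_turn_pt_padd, Nat.iter_add.
    destruct (Nat.iter a turn_pt (Nat.iter b turn_pt x)), (Nat.iter a turn_pt c'), c.
    unfold padd; simpl; f_equal; ring.
Qed.

Lemma turn_affine_deck a : exists g, deck g /\ turn_affine a g.
Proof.
  induction a as [|a [g [Hg [c Hc]]]].
  - exists (transl 0 0). split; [constructor|]. exists (0, 0).
    intros [x y]; unfold transl, padd; simpl; f_equal; ring.
  - exists (fun x => Defs.sigma (rho (g x))). split.
    + apply (deck_comp Defs.sigma (fun x => rho (g x))); [constructor|].
      apply (deck_comp rho g); [constructor | exact Hg].
    + exists (turn_pt c). intro x. simpl. rewrite Hc.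
      destruct (Nat.iter a turn_pt x), c.
      unfold Defs.sigma, rho, turn_pt, padd; simpl; f_equal; ring.
Qed.

Lemma deck_reflects_lattice g x : deck g -> in_lattice (g x) -> in_lattice x.
Proof.
  intro Hg; revert x; induction Hg; intros [x y] [a [b Hab]].
  - unfold rho in Hab; simpl in Hab. injection Hab as H1 H2.
    exists (b + (1 - a))%Z, (1 - a)%Z. rewrite plus_IZR, minus_IZR. f_equal; lra.
  - unfold Defs.sigma in Hab; simpl in Hab. injection Hab as H1 H2.
    exists (1 - a)%Z, (- b)%Z. rewrite minus_IZR, opp_IZR. f_equal; lra.
  - unfold transl in Hab; simpl in Hab. injection Hab as H1 H2.
    exists (a - m)%Z, (b - n)%Z. rewrite !minus_IZR. f_equal; lra.
  - apply IHHg2, IHHg1. exists a, b; exact Hab.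
Qed.

Lemma represents_deck a g v l : deck g -> turn_affine a g -> represents v l ->
  represents (Nat.iter a turn v) (fun t => g (l t)).
Proof.
  intros Hdeck [c Hg] [u1 [u2 [k [Hk [Hl Havoid]]]]].
  set (u := padd (Nat.iter a turn_pt (u1, u2)) c).
  exists (fst u), (snd u), k. repeat split; [exact Hk | |].
  - intro t. rewrite Hg, Hl, iter_turn_pt_line.
    unfold u, padd; simpl; f_equal; ring.
  - intros t Hlat. exact (Havoid t (deck_reflects_lattice g (l t) Hdeck Hlat)).
Qed.

Lemma primitive_exists_line v : primitive v -> exists l, represents v l.
Proof.
  intro Hv. destruct (Z.gcd_bezout _ _ 1 Hv) as [x [y Hxy]].
  (* the cross product of any point of this line with v is 1/2 *)
  exists (fun t => (IZR y / 2 + t * 1 * IZR (fst v), - IZR x / 2 + t * 1 * IZR (snd v))).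
  exists (IZR y / 2), (- IZR x / 2), 1. repeat split; [lra|].
  intros t [m [n Hmn]]. injection Hmn as H1 H2.
  assert (Hcross : IZR (2 * (m * snd v - n * fst v)) = IZR 1).
  { rewrite <- Hxy, mult_IZR, minus_IZR, !plus_IZR, !mult_IZR, <- H1, <- H2.
    field. }
  apply eq_IZR in Hcross. lia.
Qed.

Lemma primitive_parallel v w : primitive v -> primitive w ->
  (fst v * snd w = snd v * fst w)%Z -> w = v \/ w = rev_dir v.
Proof.
  destruct v as [v1 v2], w as [w1 w2]; unfold primitive, rev_dir; cbn [fst snd].
  intros Hv Hw Hcross. destruct (Z.gcd_bezout _ _ 1 Hv) as [x [y Hxy]].
  set (m := (x * w1 + y * w2)%Z).
  assert (Hw1 : w1 = (m * v1)%Z).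
  { transitivity (w1 * (x * v1 + y * v2))%Z; [rewrite Hxy; ring|].
    transitivity (x * v1 * w1 + y * (v2 * w1))%Z; [ring|].
    rewrite <- Hcross; unfold m; ring. }
  assert (Hw2 : w2 = (m * v2)%Z).
  { transitivity (w2 * (x * v1 + y * v2))%Z; [rewrite Hxy; ring|].
    transitivity (x * (v1 * w2) + y * v2 * w2)%Z; [ring|].
    rewrite Hcross; unfold m; ring. }
  rewrite Hw1, Hw2, Z.gcd_mul_mono_l, Hv in Hw.
  rewrite Hw1, Hw2. destruct (Z.abs_spec m) as [[_ Hm] | [_ Hm]];
    [left | right]; f_equal; lia.
Qed.

Lemma represents_direction_unique v w l : primitive v -> primitive w ->
  represents v l -> represents w l -> v = w.
Proof.
  intros Hv Hw [u1 [u2 [k [Hk [Hl _]]]]] [u1' [u2' [k' [Hk' [Hl' _]]]]].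
  assert (H0 := Hl 0); assert (H1 := Hl 1).
  rewrite Hl' in H0, H1. injection H0 as H0a H0b. injection H1 as H1a H1b.
  assert (E1 : k * IZR (fst v) = k' * IZR (fst w)) by lra.
  assert (E2 : k * IZR (snd v) = k' * IZR (snd w)) by lra.
  assert (Hcross : (fst v * snd w = snd v * fst w)%Z).
  { apply eq_IZR. rewrite !mult_IZR. apply (Rmult_eq_reg_l (k * k')); [|nra].
    transitivity ((k * IZR (fst v)) * (k' * IZR (snd w))); [ring|].
    rewrite E1, <- E2. ring. }
  destruct (primitive_parallel v w Hv Hw Hcross) as [-> | Hopp]; [reflexivity|].
  exfalso. rewrite Hopp in E1, E2. unfold rev_dir in E1, E2; cbn [fst snd] in E1, E2.
  rewrite opp_IZR in E1, E2.
  assert (Hv1 : IZR (fst v) = 0) by nra. assert (Hv2 : IZR (snd v) = 0) by nra.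
  apply eq_IZR in Hv1, Hv2. unfold primitive in Hv. rewrite Hv1, Hv2 in Hv. discriminate.
Qed.

Lemma is_lift_iff p q v : primitive (slope_dir p q) -> primitive v ->
  is_lift p q v <-> exists a, v = Nat.iter a turn (slope_dir p q).
Proof.
  intros Hpq Hv. split.
  - intros [l [g [Hl [Hdeck Hgl]]]].
    destruct (deck_turn_affine g Hdeck) as [a Ha]. exists a.
    apply (represents_direction_unique _ _ (fun t => g (l t)) Hv);
      [apply primitive_iter_turn, Hpq | exact Hgl |].
    exact (represents_deck a g _ l Hdeck Ha Hl).
  - intros [a ->]. destruct (primitive_exists_line _ Hpq) as [l Hl].
    destruct (turn_affine_deck a) as [g [Hdeck Ha]].
    exists l, g. repeat split; [exact Hl | exact Hdeck |].
    exact (represents_deck a g _ l Hdeck Ha Hl).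
Qed.

Lemma lifts_as_turns p q :
  lifts p q = map (fun a => Nat.iter a turn (slope_dir p q)) [0; 5; 1; 3; 2; 4]%nat.
Proof. unfold lifts, slope_dir, rev_dir, turn; cbn; repeat (f_equal; try ring). Qed.

Lemma in_lifts_iff p q v :
  In v (lifts p q) <-> exists a, v = Nat.iter a turn (slope_dir p q).
Proof.
  rewrite lifts_as_turns, in_map_iff. split.
  - intros [a [<- _]]. exists a; reflexivity.
  - intros [a ->]. exists (a mod 6)%nat. split; [symmetry; apply iter_turn_mod6|].
    assert (Ha : (a mod 6 < 6)%nat) by (apply Nat.mod_upper_bound; discriminate).
    destruct (a mod 6) as [|[|[|[|[|[|]]]]]]; simpl; tauto || lia.
Qed.

Lemma lifts_NoDup p q : (p, q) <> (0%Z, 0%Z) -> NoDup (lifts p q).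
Proof.
  intro Hnz. unfold lifts, slope_dir, rev_dir; simpl.
  repeat constructor; simpl; intro H; repeat destruct H as [H|H];
    try (injection H; intros; apply Hnz; f_equal; lia); contradiction.
Qed.

Theorem lemma5p1 (p q : Z) (hpq : Z.gcd p q = 1%Z) :
  NoDup [slope_dir p q; slope_dir q (q - p); slope_dir (p - q) p;
         rev_dir (slope_dir p q); rev_dir (slope_dir q (q - p));
         rev_dir (slope_dir (p - q) p)] /\
  (forall v : Z * Z, Z.gcd (fst v) (snd v) = 1%Z ->
    (is_lift p q v <->
     In v [slope_dir p q; slope_dir q (q - p); slope_dir (p - q) p;
           rev_dir (slope_dir p q); rev_dir (slope_dir q (q - p));
           rev_dir (slope_dir (p - q) p)])).
Proof.
  assert (Hprim : primitive (slope_dir p q))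
    by (unfold primitive; simpl; now rewrite Z.gcd_comm).
  split.
  - apply lifts_NoDup. intro H0. injection H0 as -> ->. discriminate.
  - intros v Hv. change (is_lift p q v <-> In v (lifts p q)).
    rewrite in_lifts_iff. exact (is_lift_iff p q v Hprim Hv).
Qed.
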